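(* Fix an integer $r\ge0$. There is a constant $C_r>0$ depending only on $r$ such that for every $n\ge1$ and every $\theta\in\mathbb{R}^n$, $$\|\theta-P^{(n,r)}\theta\|_\infty\le C_r\,\mathrm{TV}^{(r+1)}(\theta).$$
   Context: $P^{(n,r)}$ is the orthogonal projection matrix in $\mathbb{R}^n$ onto the subspace $\{(p(1/n),p(2/n),\dots,p(n/n)): p\text{ a real polynomial of degree at most } r\}$. For $\theta\in\mathbb{R}^n$: $D^{(1)}\theta=(\theta_2-\theta_1,\dots,\theta_n-\theta_{n-1})$, $D^{(s)}\theta=D^{(1)}(D^{(s-1)}\theta)\in\mathbb{R}^{n-s}$, and $\mathrm{TV}^{(s)}(\theta)=n^{s-1}\|D^{(s)}\theta\|_1$; thus $\mathrm{TV}^{(r+1)}(\theta)=n^{r}\|D^{(r+1)}\theta\|_1$. *)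

From HB Require Import structures.
From mathcomp Require Import all_boot all_order all_algebra.
From mathcomp Require Import Rstruct.
From Stdlib Require Rdefinitions.
Local Notation R := Rdefinitions.R.

Set Implicit Arguments.
Unset Strict Implicit.
Unset Printing Implicit Defensive.

Import Order.TTheory GRing.Theory Num.Theory.
Local Open Scope ring_scope.

(* Vandermonde-type matrix whose row space is
   { (p(1/n), ..., p(n/n)) : deg p <= r }  (rows = monomials x^0 .. x^r,
   column j (0-based) corresponds to the point (j+1)/n). *)
Definition polyVander (n r : nat) : 'M[R]_(r.+1, n) :=
  \matrix_(i < r.+1, j < n) ((j.+1)%:R / n%:R) ^+ i.

(* Orthogonal projection matrix onto the row space of A (rows viewed as
   vectors of R^n): with B = row_base A (linearly independent rows spanning
   the same space), P = B^T (B B^T)^{-1} B. *)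
Definition orthProj (m n : nat) (A : 'M[R]_(m, n)) : 'M[R]_n :=
  let B := row_base A in (B^T *m invmx (B *m B^T)) *m B.

Definition Pnr (n r : nat) : 'M[R]_n := orthProj (polyVander n r).

(* theta as a sequence indexed from 0 (entry i is theta_{i+1} in the paper) *)
Definition vseq (n : nat) (theta : 'cV[R]_n) (i : nat) : R :=
  match insub i with Some k => theta k 0 | None => 0 end.

Definition D1 (f : nat -> R) : nat -> R := fun i => f i.+1 - f i.
Definition Ds (s : nat) (f : nat -> R) : nat -> R := iter s D1 f.

Definition Dnorm1 (s n : nat) (theta : 'cV[R]_n) : R :=
  \sum_(i < n - s) `|Ds s (vseq theta) i|.

Definition TV (s n : nat) (theta : 'cV[R]_n) : R :=
  (n%:R) ^+ (s.-1) * Dnorm1 s theta.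

Definition supnorm (n : nat) (v : 'cV[R]_n) : R :=
  \big[Num.max/0]_(i < n) `|v i 0|.

(* Summing the (r+1)-st differences of theta back up r+1 times writes
   theta_j = G((j+1)/n) + e_j with deg G <= r and |e_j| <= n^r |D^(r+1) theta|_1,
   because 'C(j, k) is a polynomial of degree k in (j+1)/n.  As P fixes the grid
   values of G, theta - P theta = e - P e, and P e is the vector of grid values of
   some U with deg U <= r and |P e|_1 <= sqrt n |P e|_2 <= sqrt n |e|_2 <= n |e|_inf.
   Finally |U(x_i)| <= C_r / n * sum_j |U(x_j)|: Lagrange interpolation at r+1 grid
   nodes about n/(2r+2) apart bounds |U(x_i)| by the values at the nodes, and
   averaging over the ~n/2 translates of these nodes yields the mean over the grid. *)

From HB Require Import structures.
From mathcomp Require Import all_boot all_order all_algebra.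
From mathcomp Require Import Rstruct.
From mathcomp Require Import ring lra zify.
From Stdlib Require Rdefinitions.

Set Implicit Arguments.
Unset Strict Implicit.
Unset Printing Implicit Defensive.

Local Notation R := Rdefinitions.R.
Import Order.TTheory GRing.Theory Num.Theory.
Local Open Scope ring_scope.

Section Sums.
Variable F : realFieldType.

Lemma ler_sum_window (G : nat -> F) (c a n : nat) : (c + a <= n)%N ->
  (forall m, 0 <= G m) -> \sum_(k < a) G (c + k)%N <= \sum_(j < n) G j.
Proof.
move=> can G0.
have window : \sum_(c <= i < c + a) G i = \sum_(k < a) G (c + k)%N.
  by rewrite -{1}[c]add0n big_addn addKn big_mkord; apply: eq_bigr => k _; rewrite addnC.
rewrite -window -(big_mkord xpredT) (@big_cat_nat _ _ _ c 0 n) ?leq0n //=; last lia.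
rewrite (@big_cat_nat _ _ _ (c + a) c n) ?leq_addr //=.
by rewrite addrCA lerDl addr_ge0 ?sumr_ge0.
Qed.

Lemma norm_le_increments (h : nat -> F) (E : F) (N : nat) : h 0%N = 0 ->
  (forall m, (m.+1 < N)%N -> `|h m.+1 - h m| <= E) ->
  forall j, (j < N)%N -> `|h j| <= j%:R * E.
Proof.
move=> h0 hD; elim=> [|j IH] jN; first by rewrite h0 normr0 mul0r.
have -> : h j.+1 = (h j.+1 - h j) + h j by rewrite subrK.
rewrite -natr1 mulrDl mul1r [_ * E + E]addrC.
by apply: le_trans (ler_normD _ _) _; rewrite lerD ?hD ?IH // ltnW.
Qed.

Lemma sum_norm_le_of_sum_sqr (n : nat) (u : 'I_n -> F) (M : F) : 0 <= M ->
  \sum_j u j ^+ 2 <= n%:R * M ^+ 2 -> \sum_j `|u j| <= n%:R * M.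
Proof.
move=> M0 u2; have [M_eq0|M_neq0] := eqVneq M 0.
  rewrite M_eq0 expr0n mulr0 in u2.
  have u_eq0 j : u j = 0.
    apply/eqP; rewrite -sqrf_eq0; apply/eqP.
    apply: (psumr_eq0P (P := xpredT) (fun k _ => sqr_ge0 (u k))) => //.
    by apply/eqP; rewrite eq_le u2 sumr_ge0 // => k _; apply: sqr_ge0.
  by rewrite M_eq0 mulr0 big1 // => j _; rewrite u_eq0 normr0.
have M_gt0 : 0 < M by rewrite lt0r M_neq0.
have amgm j : 2 * M * `|u j| <= u j ^+ 2 + M ^+ 2.
  have := sqr_ge0 (`|u j| - M); rewrite -(real_normK (num_real (u j))); nra.
have : \sum_j 2 * M * `|u j| <= \sum_j (u j ^+ 2 + M ^+ 2) by apply: ler_sum => j _.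
rewrite -mulr_sumr big_split /= sumr_const card_ord -mulr_natl => S.
by rewrite -(ler_pM2l (_ : 0 < 2 * M)) ?mulr_gt0 //; nra.
Qed.

End Sums.

Lemma Ds_succ (s : nat) (f : nat -> R) : Ds s.+1 f = Ds s (D1 f).
Proof. by rewrite /Ds iterSr. Qed.

(* The coefficients of the lowest binomial term are fixed by [f 0]; the others
   come from the expansion of [D1 f], since [D1 ('C(., k.+1)) = 'C(., k)]. *)
Lemma discrete_taylor (s N : nat) (f : nat -> R) : exists c : nat -> R,
  forall j, (j < N)%N ->
  `|f j - \sum_(k < s.+1) c k * 'C(j, k)%:R| <=
    N%:R ^+ s * \sum_(m < N - s.+1) `|Ds s.+1 f m|.
Proof.
elim: s N f => [|s IH] N f.
  exists (fun=> f 0%N) => j jN.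
  rewrite big_ord1 bin0 mulr1 expr0 mul1r -(telescope_sumr f (leq0n j)) big_mkord.
  apply: le_trans (ler_norm_sum _ _ _) _.
  by apply: (@ler_sum_window _ (fun m => `|Ds 1 f m|) 0) => //; lia.
have [c Hc] := IH N.-1 (D1 f).
pose c' k := if k is k'.+1 then c k' else f 0%N.
exists c' => j jN.
pose res i := f i - \sum_(k < s.+2) c' k * 'C(i, k)%:R.
rewrite -/(res j).
have resE i : res i = f i - f 0%N - \sum_(k < s.+1) c k * 'C(i, k.+1)%:R.
  by rewrite /res big_ord_recl /= bin0 mulr1 opprD addrA.
have res_incr m : res m.+1 - res m = D1 f m - \sum_(k < s.+1) c k * 'C(m, k)%:R.
  have pascal : \sum_(k < s.+1) c k * 'C(m.+1, k.+1)%:R =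
      \sum_(k < s.+1) c k * 'C(m, k.+1)%:R + \sum_(k < s.+1) c k * 'C(m, k)%:R.
    by rewrite -big_split; apply: eq_bigr => k _; rewrite binS natrD mulrDr.
  by rewrite !resE pascal /D1; ring.
set S := \sum_(m < N - s.+2) _.
have S0 : 0 <= S by rewrite sumr_ge0.
have res0 : res 0%N = 0.
  by rewrite resE big1 ?subrr ?subr0 // => k _; rewrite bin0n mulr0.
have incr_le m : (m.+1 < N)%N -> `|res m.+1 - res m| <= N%:R ^+ s * S.
  move=> mN; rewrite res_incr; apply: le_trans (Hc m _) _; first lia.
  rewrite -Ds_succ (_ : (N.-1 - s.+1 = N - s.+2)%N); last lia.
  by rewrite ler_wpM2r // lerXn2r ?nnegrE ?ler_nat //; lia.
apply: le_trans (norm_le_increments res0 incr_le jN) _.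
by rewrite exprS -mulrA ler_wpM2r ?mulr_ge0 ?exprn_ge0 ?ler_nat // ltnW.
Qed.

Section BinomialPoly.
Variable F : numFieldType.

Definition gridpt (n j : nat) : F := j.+1%:R / n%:R.

Definition binom_poly (n k : nat) : {poly F} :=
  \prod_(i < k) ((n%:R / i.+1%:R) *: ('X - (gridpt n i)%:P)).

Lemma size_binom_poly (n k : nat) : (size (binom_poly n k) <= k.+1)%N.
Proof.
elim: k => [|k IH]; first by rewrite /binom_poly big_ord0 size_poly1.
rewrite /binom_poly big_ord_recr /= -/(binom_poly n k).
apply: leq_trans (size_polyMleq _ _) _.
have : (size ((n%:R / k.+1%:R) *: ('X - (gridpt n k)%:P)) <= 2)%N.
  by rewrite (leq_trans (size_scale_leq _ _)) ?size_XsubC.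
by move: IH; set p := size _; set q := size _; lia.
Qed.

Lemma binom_polyE (n k j : nat) : (0 < n)%N ->
  (binom_poly n k).[gridpt n j] = 'C(j, k)%:R.
Proof.
move=> n_gt0; have n_neq0 : n%:R != 0 :> F by rewrite pnatr_eq0 -lt0n.
elim: k => [|k IH]; first by rewrite /binom_poly big_ord0 hornerC bin0.
have k1_neq0 : k.+1%:R != 0 :> F by rewrite pnatr_eq0.
rewrite /binom_poly big_ord_recr /= -/(binom_poly n k).
rewrite hornerM hornerZ hornerXsubC IH /gridpt.
have -> : n%:R / k.+1%:R * (j.+1%:R / n%:R - k.+1%:R / n%:R) = (j%:R - k%:R) / k.+1%:R :> F.
  by rewrite -!natr1; field; rewrite natr1 k1_neq0 n_neq0.
have [jk|kj] := ltnP j k; first by rewrite !bin_small ?mul0r //; lia.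
apply: (mulIf k1_neq0); rewrite mulrA divfK // -natrB // -!natrM.
by rewrite [('C(j, k) * _)%N]mulnC -mul_bin_left mulnC.
Qed.

End BinomialPoly.
Arguments gridpt {F} n j.

Lemma poly_approx_TV (r n : nat) (theta : 'cV[R]_n) : (0 < n)%N ->
  exists2 G : {poly R}, (size G <= r.+1)%N &
    forall j : 'I_n, `|theta j 0 - G.[gridpt n j]| <= TV r.+1 theta.
Proof.
move=> n_gt0; have [c Hc] := discrete_taylor r n (vseq theta).
exists (\sum_(k < r.+1) c k *: binom_poly R n k).
  apply: (big_ind (fun p : {poly R} => (size p <= r.+1)%N)).
  - by rewrite size_poly0.
  - by move=> p q sp sq; apply: (leq_trans (size_polyD _ _)); rewrite geq_max sp sq.
  - by move=> k _; rewrite (leq_trans (size_scale_leq _ _)) // (leq_trans (size_binom_poly _ _ _)).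
move=> j; rewrite horner_sum (eq_bigr (fun k : 'I_r.+1 => c k * 'C(j, k)%:R)); last first.
  by move=> k _; rewrite hornerZ binom_polyE.
have -> : theta j 0 = vseq theta j by rewrite /vseq valK.
exact: Hc.
Qed.

Section GramProjection.
Variables (F : realFieldType) (p n : nat) (B : 'M[F]_(p, n)).
Hypothesis B_free : row_free B.

Definition gram_proj : 'M[F]_n := B^T *m invmx (B *m B^T) *m B.

Lemma mulmx_tr_eq0 (m : nat) (u : 'rV[F]_m) : u *m u^T = 0 -> u = 0.
Proof.
move=> /(congr1 (fun M : 'M_1 => M 0 0)); rewrite !mxE => usq0.
have {}usq0 : \sum_j u 0 j ^+ 2 = 0.
  by rewrite -[RHS]usq0; apply: eq_bigr => j _; rewrite expr2 mxE.
apply/matrixP => i j; rewrite mxE (ord1 i).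
have := psumr_eq0P (P := xpredT) (fun k _ => sqr_ge0 (u 0 k)) usq0 (i := j) isT.
by move/eqP; rewrite sqrf_eq0 => /eqP.
Qed.

Lemma unitmx_gram : B *m B^T \in unitmx.
Proof.
rewrite -row_free_unit -kermx_eq0; apply/rowV0P => v /sub_kermxP vBBt0.
have : (v *m B) *m (v *m B)^T = 0 by rewrite trmx_mul mulmxA -(mulmxA v) vBBt0 mul0mx.
by move/mulmx_tr_eq0/eqP; rewrite mulmx_free_eq0 // => /eqP.
Qed.

Lemma gram_proj_tr : gram_proj *m B^T = B^T.
Proof. by rewrite /gram_proj -!mulmxA mulVmx ?unitmx_gram // mulmx1. Qed.

Lemma trmx_gram_proj : gram_proj^T = gram_proj.
Proof. by rewrite /gram_proj !trmx_mul trmxK trmx_inv trmx_mul trmxK mulmxA. Qed.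

Lemma gram_proj_idem : gram_proj *m gram_proj = gram_proj.
Proof. by rewrite {2}/gram_proj !mulmxA gram_proj_tr. Qed.

(* [u = P e] satisfies [u . u = e . u], so [|e|^2 - |u|^2 = |e - u|^2]. *)
Lemma gram_proj_sqr_le (e : 'cV[F]_n) :
  \sum_j (gram_proj *m e) j 0 ^+ 2 <= \sum_j e j 0 ^+ 2.
Proof.
set u := gram_proj *m e.
have dot_uu : \sum_j e j 0 * u j 0 = \sum_j u j 0 ^+ 2.
  have uu : u^T *m u = e^T *m u.
    by rewrite /u trmx_mul trmx_gram_proj -mulmxA (mulmxA gram_proj) gram_proj_idem.
  transitivity ((e^T *m u) 0 0); first by rewrite mxE; apply: eq_bigr => j _; rewrite [e^T 0 j]mxE.
  by rewrite -uu mxE; apply: eq_bigr => j _; rewrite [u^T 0 j]mxE expr2.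
have pythagoras : \sum_j e j 0 ^+ 2 - \sum_j u j 0 ^+ 2 =
    \sum_j (e j 0 - u j 0) ^+ 2 + 2 * (\sum_j e j 0 * u j 0 - \sum_j u j 0 ^+ 2).
  by rewrite -!sumrB mulr_sumr -big_split; apply: eq_bigr => j _ /=; ring.
rewrite -subr_ge0 pythagoras dot_uu subrr mulr0 addr0.
by rewrite sumr_ge0 // => j _; exact: sqr_ge0.
Qed.

End GramProjection.

Lemma orthProjE (m n : nat) (A : 'M[R]_(m, n)) : orthProj A = gram_proj (row_base A).
Proof. by []. Qed.

Lemma orthProj_tr (m n : nat) (A : 'M[R]_(m, n)) : orthProj A *m A^T = A^T.
Proof.
have /submxP[D AD] : (A <= row_base A)%MS by rewrite eq_row_base.
have AtE : A^T = (row_base A)^T *m D^T by rewrite {1}AD trmx_mul.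
by rewrite AtE mulmxA orthProjE gram_proj_tr ?row_base_free.
Qed.

Lemma orthProj_range (m n : nat) (A : 'M[R]_(m, n)) :
  exists Z : 'M[R]_(m, n), orthProj A = A^T *m Z.
Proof.
have /submxP[D AD] : (row_base A <= A)%MS by rewrite eq_row_base.
exists (D^T *m invmx (row_base A *m (row_base A)^T) *m row_base A).
by rewrite orthProjE /gram_proj {1}AD trmx_mul !mulmxA.
Qed.

Section LagrangeBound.
Variables (F : realFieldType) (s : nat) (t : nat -> F) (y c : F).
Hypotheses (t_inj : injective t) (c_gt0 : 0 < c).
Hypothesis y_near : forall j : 'I_s.+1, `|y - t j| <= 1.
Hypothesis t_sep : forall j k : 'I_s.+1, j != k -> c <= `|t k - t j|.

Lemma lagrange_basis_norm_le (k : 'I_s.+1) :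
  `|(tnth (s.+1.-lagrange t) k : {poly F}).[y]| <= c^-1 ^+ s.
Proof.
rewrite (lagrangeE (ltn0Sn s) t_inj k) /= hornerM hornerC !horner_prod.
rewrite normrM normfV !normr_prod.
set den := \prod_(j < s.+1 | j != k) _; set num := \prod_(j < s.+1 | j != k) _.
have num_le1 : num <= 1.
  by apply: prodr_ile1 => j _; rewrite normr_ge0 hornerXsubC y_near.
have den_ge : c ^+ s <= den.
  have -> : c ^+ s = \prod_(j < s.+1 | j != k) c by rewrite prodr_const cardC1 card_ord.
  by apply: ler_prod => j jk; rewrite ltW //= hornerXsubC t_sep.
have den_gt0 : 0 < den by apply: lt_le_trans den_ge; rewrite exprn_gt0.
apply: le_trans (_ : den^-1 <= _).
  by rewrite -[leRHS]mulr1 ler_wpM2l // invr_ge0 ltW.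
by rewrite exprVn lef_pV2 ?posrE ?exprn_gt0.
Qed.

Lemma poly_norm_le_nodes (Q : {poly F}) : (size Q <= s.+1)%N ->
  `|Q.[y]| <= c^-1 ^+ s * \sum_(k < s.+1) `|Q.[t k]|.
Proof.
move=> sQ; rewrite {1}(lagrange_gen (ltn0Sn s) t_inj sQ) horner_sum mulr_sumr.
apply: le_trans (ler_norm_sum _ _ _) _; apply: ler_sum => k _.
by rewrite hornerM hornerC normrM mulrC ler_wpM2r ?lagrange_basis_norm_le.
Qed.

End LagrangeBound.

Lemma gridpt_dist_le1 (F : realFieldType) (n i j : nat) : (i < n)%N -> (j < n)%N ->
  `|gridpt n i - gridpt n j : F| <= 1.
Proof.
have gridpt01 k : (k < n)%N -> 0 <= (gridpt n k : F) <= 1.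
  move=> kn; have n_gt0 : (0 : F) < n%:R by rewrite ltr0n; lia.
  by rewrite divr_ge0 ?ler0n //= ler_pdivrMr // mul1r ler_nat.
move=> /gridpt01/andP[? ?] /gridpt01/andP[? ?]; rewrite ler_norml; apply/andP; split; lra.
Qed.

Lemma natr_dist_ge1 (F : realDomainType) (k j : nat) : k != j -> 1 <= `|k%:R - j%:R : F|.
Proof.
move=> kj; rewrite ler_normr; case: (ltngtP k j) => [kj'|kj'|e]; last by rewrite e eqxx in kj.
  by apply/orP; right; rewrite opprB -natrB ?ler1n ?subn_gt0 // ltnW.
by apply/orP; left; rewrite -natrB ?ler1n ?subn_gt0 // ltnW.
Qed.

Definition grid_const (r : nat) : nat := 2 * r.+1 * (4 * r.+1) ^ r.

Section GridLarge.
Variables (F : realFieldType) (r n : nat).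
Hypothesis n_large : (2 * r.+1 <= n)%N.

Local Notation h := (n %/ (2 * r.+1))%N.
Local Notation L := (n - r * h)%N.

Let h_gt0 : (0 < h)%N. Proof. by rewrite divn_gt0. Qed.
Let h_le : (h * (2 * r.+1) <= n)%N. Proof. exact: leq_divM. Qed.
Let n_lt : (n < h.+1 * (2 * r.+1))%N. Proof. exact: ltn_ceil. Qed.

Lemma grid_nodes_inj (a : nat) : injective (fun k => gridpt n (k * h + a) : F).
Proof.
have n_neq0 : (n%:R : F)^-1 != 0 by rewrite invr_eq0 pnatr_eq0 -lt0n; lia.
move=> u v; rewrite /gridpt => /(mulIf n_neq0)/eqP.
by rewrite eqr_nat eqSS eqn_add2r eqn_pmul2r // => /eqP.
Qed.

(* The [r + 1] nodes [k h + a] are [h >= n / (4 (r + 1))] apart and within [[0, n)]. *)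
Lemma grid_poly_le_nodes (i a : nat) (Q : {poly F}) : (i < n)%N -> (a < L)%N ->
  (size Q <= r.+1)%N ->
  `|Q.[gridpt n i]| <= ((4 * r.+1) ^ r)%:R * \sum_(k < r.+1) `|Q.[gridpt n (k * h + a)]|.
Proof.
move=> i_lt a_lt sQ.
have n_gt0 : (0 : F) < n%:R by rewrite ltr0n; lia.
have hF_gt0 : (0 : F) < h%:R by rewrite ltr0n.
apply: le_trans (@poly_norm_le_nodes F r _ (gridpt n i) (h%:R / n%:R)
                   (@grid_nodes_inj a) _ _ _ Q sQ) _.
- by rewrite divr_gt0.
- by move=> j; apply: gridpt_dist_le1 => //; have := ltn_ord j; nia.
- move=> j k jk; rewrite /gridpt -mulrBl normrM normfV [`|n%:R|]ger0_norm ?ler0n //.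
  rewrite ler_pM2r ?invr_gt0 //.
  have -> : (k * h + a).+1%:R - (j * h + a).+1%:R = (k%:R - j%:R) * h%:R :> F.
    by rewrite -!natr1 !natrD !natrM; ring.
  rewrite normrM (ger0_norm (ltW hF_gt0)) ler_peMl ?natr_dist_ge1 //.
  by rewrite eq_sym.
rewrite ler_wpM2r ?sumr_ge0 // invf_div natrX lerXn2r ?nnegrE ?divr_ge0 ?ler0n //.
by rewrite ler_pdivrMr // -natrM ler_nat; nia.
Qed.

Lemma grid_poly_le_mean_large (i : nat) (Q : {poly F}) : (i < n)%N ->
  (size Q <= r.+1)%N ->
  `|Q.[gridpt n i]| * n%:R <= (grid_const r)%:R * \sum_(j < n) `|Q.[gridpt n j]|.
Proof.
move=> i_lt sQ; set S := \sum_(j < n) _; set Lam : F := ((4 * r.+1) ^ r)%:R.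
have Lam_ge0 : 0 <= Lam by rewrite ler0n.
have window k : (k < r.+1)%N -> \sum_(a < L) `|Q.[gridpt n (k * h + a)]| <= S.
  by move=> k_lt; apply: (ler_sum_window (G := fun j => `|Q.[gridpt n j]|)) => //; nia.
have averaged : L%:R * `|Q.[gridpt n i]| <= Lam * (r.+1%:R * S).
  have -> : L%:R * `|Q.[gridpt n i]| = \sum_(a < L) `|Q.[gridpt n i]|.
    by rewrite sumr_const card_ord mulr_natl.
  apply: le_trans (_ : \sum_(a < L) Lam * \sum_(k < r.+1) `|Q.[gridpt n (k * h + a)]| <= _).
    by apply: ler_sum => a _; apply: grid_poly_le_nodes.
  rewrite -mulr_sumr exchange_big /= ler_wpM2l //.
  apply: le_trans (_ : \sum_(k < r.+1) S <= _); last by rewrite sumr_const card_ord mulr_natl.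
  by apply: ler_sum => k _; apply: window.
have n_le_2L : n%:R <= 2 * L%:R :> F by rewrite -natrM ler_nat; nia.
apply: le_trans (_ : `|Q.[gridpt n i]| * (2 * L%:R) <= _); first by rewrite ler_wpM2l.
rewrite /grid_const !natrM -/Lam; nra.
Qed.

End GridLarge.

Lemma grid_poly_le_mean (F : realFieldType) (r n i : nat) (Q : {poly F}) :
  (i < n)%N -> (size Q <= r.+1)%N ->
  `|Q.[gridpt n i]| * n%:R <= (grid_const r)%:R * \sum_(j < n) `|Q.[gridpt n j]|.
Proof.
move=> i_lt sQ; have [n_small|n_large] := ltnP n (2 * r.+1); last first.
  exact: grid_poly_le_mean_large.
have Qi_le : `|Q.[gridpt n i]| <= \sum_(j < n) `|Q.[gridpt n j]|.
  by rewrite (bigD1 (Ordinal i_lt)) //= lerDl sumr_ge0.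
rewrite mulrC ler_pM ?ler_nat //.
have pow_gt0 : (0 < (4 * r.+1) ^ r)%N by rewrite expn_gt0.
rewrite /grid_const; nia.
Qed.

Section PolyProjection.
Variables n r : nat.

Lemma polyVander_tr_coef (G : {poly R}) : (size G <= r.+1)%N ->
  (polyVander n r)^T *m \col_(k < r.+1) G`_k = \col_(j < n) G.[gridpt n j].
Proof.
move=> sG; apply/matrixP => j i; rewrite (ord1 i) !mxE (horner_coef_wide _ sG).
by apply: eq_bigr => k _; rewrite !mxE mulrC.
Qed.

Lemma Pnr_grid (G : {poly R}) : (size G <= r.+1)%N ->
  Pnr n r *m \col_(j < n) G.[gridpt n j] = \col_(j < n) G.[gridpt n j].
Proof. by move=> sG; rewrite -(polyVander_tr_coef sG) mulmxA orthProj_tr. Qed.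

Lemma Pnr_range (v : 'cV[R]_n) :
  exists2 U : {poly R}, (size U <= r.+1)%N & Pnr n r *m v = \col_(j < n) U.[gridpt n j].
Proof.
have [Z PZ] := orthProj_range (polyVander n r).
exists (\poly_(k < r.+1) (Z *m v) (inord k) 0); first exact: size_poly.
rewrite -polyVander_tr_coef ?size_poly // /Pnr PZ -mulmxA; congr (_ *m _).
by apply/matrixP => k i; rewrite (ord1 i) [RHS]mxE coef_poly ltn_ord inord_val.
Qed.

Lemma Pnr_norm_le (e : 'cV[R]_n) (M : R) : (forall j, `|e j 0| <= M) ->
  forall i, `|(Pnr n r *m e) i 0| <= (grid_const r)%:R * M.
Proof.
move=> eB i; have M0 : 0 <= M := le_trans (normr_ge0 _) (eB i).
have n_gt0 : (0 : R) < n%:R by rewrite ltr0n (leq_ltn_trans _ (ltn_ord i)).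
have [U sU PeE] := Pnr_range e.
have Pe_sqr : \sum_j (Pnr n r *m e) j 0 ^+ 2 <= n%:R * M ^+ 2.
  apply: le_trans (gram_proj_sqr_le (row_base_free _) e) _.
  apply: le_trans (_ : \sum_(j < n) M ^+ 2 <= _); last by rewrite sumr_const card_ord mulr_natl.
  by apply: ler_sum => j _; rewrite -real_normK ?num_real // lerXn2r ?nnegrE.
have U_abs : \sum_(j < n) `|U.[gridpt n j]| <= n%:R * M.
  apply: le_trans (sum_norm_le_of_sum_sqr M0 Pe_sqr).
  by apply: ler_sum => j _; rewrite PeE mxE.
rewrite PeE mxE -(ler_pM2r n_gt0); apply: le_trans (grid_poly_le_mean (ltn_ord i) sU) _.
by rewrite -mulrA ler_wpM2l // mulrC.
Qed.

End PolyProjection.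

Theorem lemma11 (r : nat) :
  exists C : R, 0 < C /\
    forall (n : nat) (theta : 'cV[R]_n), (1 <= n)%N ->
      supnorm (theta - Pnr n r *m theta) <= C * TV r.+1 theta.
Proof.
have K_ge0 : 0 <= (grid_const r)%:R :> R by rewrite ler0n.
exists (1 + (grid_const r)%:R); split=> [|n theta n_gt0]; first lra.
have [G sG thetaG] := poly_approx_TV r theta n_gt0.
set g := \col_(j < n) G.[gridpt n j].
have eB j : `|(theta - g) j 0| <= TV r.+1 theta by rewrite !mxE; exact: thetaG.
have -> : theta - Pnr n r *m theta = (theta - g) - Pnr n r *m (theta - g).
  by rewrite mulmxBr Pnr_grid // opprB addrA subrK.
have TV_ge0 : 0 <= TV r.+1 theta := le_trans (normr_ge0 _) (eB (Ordinal n_gt0)).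
rewrite /supnorm; apply: bigmax_le => [|i _]; first by rewrite mulr_ge0 ?addr_ge0.
rewrite mxE [(- (_ *m _)) i 0]mxE mulrDl mul1r (le_trans (ler_normB _ _)) //.
by rewrite lerD ?eB ?Pnr_norm_le.
Qed.
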